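(* Assume that $d_k < \sqrt2\,(p_k)^{1/2}$ for every integer $k\geq1$ with $k\neq 4$. Let $f(n) := n(n+1)/2$. Then for every integer $n\geq 1$, $$\pi(n^3) < \pi(n^3 + f(n)) < \pi(n^3 + 2f(n)) < \pi(n^3 + 4f(n)) < \pi(n^3 + 6f(n)).$$ In particular there are at least four primes between $n^3$ and $(n+1)^3$.
   Context: $p_k$ denotes the $k$th prime ($p_1=2$), $d_k := p_{k+1}-p_k$, and $\pi(x)$ is the number of primes $p\le x$. *)

From Stdlib Require Import Reals.
From mathcomp Require Import all_boot.

Lemma next_prime_ex (m : nat) : exists p, (m < p) && prime p.
Proof. by case: (prime_above m) => p H1 H2; exists p; rewrite H1 H2. Qed.

Definition next_prime (m : nat) : nat := ex_minn (next_prime_ex m).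

(* primes0 k = the (k+1)-th prime (0-based enumeration: primes0 0 = 2) *)
Fixpoint primes0 (k : nat) : nat :=
  match k with
  | 0 => 2
  | k'.+1 => next_prime (primes0 k')
  end.

(* p_ k = k-th prime, 1-indexed (p_ 1 = 2); p_ 0 is an unused junk value *)
Definition p_ (k : nat) : nat := primes0 k.-1.

Definition d_ (k : nat) : nat := p_ k.+1 - p_ k.

Definition primepi (x : nat) : nat := count prime (iota 0 x.+1).

Definition f_tri (n : nat) : nat := (n * n.+1) %/ 2.

(* Under the hypothesis, any interval (x, x + L] with 2 x <= L^2 contains a
   prime as soon as x >= 11: if p_k <= x < p_(k+1), then
   d_k^2 < 2 p_k <= 2 x <= L^2, so p_(k+1) < p_k + L <= x + L.  For n >= 7
   each of the four intervals in the chain, of lengths f, f, 2f, 2f where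
   2 f = n (n + 1), satisfies this condition, and n^3 + 6 f < (n + 1)^3.
   The cases n <= 6 are checked by computation. *)
From Stdlib Require Import Reals.
From mathcomp Require Import all_boot zify.

Lemma next_prime_gt m : m < next_prime m.
Proof. by rewrite /next_prime; case: ex_minnP => p /andP []. Qed.

Lemma prime_next_prime m : prime (next_prime m).
Proof. by rewrite /next_prime; case: ex_minnP => p /andP []. Qed.

Lemma next_prime_min m p : m < p -> prime p -> next_prime m <= p.
Proof.
by move=> lt_mp pr_p; rewrite /next_prime; case: ex_minnP => q _; apply; rewrite lt_mp.
Qed.

Lemma primes0_gt k : k.+1 < primes0 k.
Proof. by elim: k => [//|k IHk] /=; apply: leq_ltn_trans (next_prime_gt _). Qed.

Lemma primes0_4_le : primes0 4 <= 11.
Proof.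
have p1 : primes0 1 <= 3 by apply: next_prime_min.
have p2 : primes0 2 <= 5 by apply: next_prime_min; first exact: leq_ltn_trans p1 _.
have p3 : primes0 3 <= 7 by apply: next_prime_min; first exact: leq_ltn_trans p2 _.
by apply: next_prime_min; first exact: leq_ltn_trans p3 _.
Qed.

Lemma primes0_bracket x : 2 <= x -> exists j, primes0 j <= x < primes0 j.+1.
Proof.
move=> x_ge2.
suff bracket m : x < primes0 m -> exists j, primes0 j <= x < primes0 j.+1.
  by apply: (bracket x); apply: ltnW (primes0_gt x).
elim: m => [/= | m IHm x_lt]; first lia.
have [le_px | lt_xp] := leqP (primes0 m) x; last exact: IHm.
by exists m; rewrite le_px.
Qed.

Lemma primepi_addn x m :
  primepi (x + m) = primepi x + count prime (iota x.+1 m).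
Proof. by rewrite /primepi -addSn iotaD add0n count_cat. Qed.

Lemma leq_primepi x y : x <= y -> primepi x <= primepi y.
Proof. by move/subnKC <-; rewrite primepi_addn leq_addr. Qed.

Lemma primepi_ltn_prime x y p : x < p <= y -> prime p -> primepi x < primepi y.
Proof.
case/andP=> lt_xp le_py pr_p; have /subnKC <- : x <= y by lia.
rewrite primepi_addn -[X in X < _]addn0 ltn_add2l -has_count.
by apply/hasP; exists p; rewrite // mem_iota; lia.
Qed.

Lemma ltn_sqr_of_lt_sqrt a b : Rlt (INR a) (sqrt (INR b)) -> a * a < b.
Proof.
move=> lt_ab; apply/ltP/INR_lt; rewrite mult_INR -(sqrt_sqrt _ (pos_INR b)).
by apply: Rmult_le_0_lt_compat => //; apply: pos_INR.
Qed.

Section PrimeInShortInterval.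

Hypothesis gap_sqr_lt : forall k, 1 <= k -> k <> 4 -> d_ k * d_ k < 2 * p_ k.

(* The threshold 11 excludes the gap 7 -> 11, the exception k = 4. *)
Lemma primepi_ltn_addn x L : 11 <= x -> 2 * x <= L * L -> primepi x < primepi (x + L).
Proof.
move=> x_ge11 x_le_L2.
have [j /andP [le_pj lt_xq]] := @primes0_bracket x ltac:(lia).
have j_neq3 : j <> 3 by move=> j3; move: lt_xq; rewrite j3; have := primes0_4_le; lia.
have gap_lt_L : primes0 j.+1 - primes0 j < L.
  have : d_ j.+1 * d_ j.+1 < 2 * p_ j.+1 by apply: gap_sqr_lt; lia.
  rewrite /d_ /p_ /= => gap_lt.
  by rewrite ltnNge; apply/negP => /[dup]/leq_mul/[apply]; lia.
apply: (@primepi_ltn_prime _ _ (primes0 j.+1)); last exact: prime_next_prime.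
by rewrite lt_xq; lia.
Qed.

End PrimeInShortInterval.

Lemma f_tri_double n : f_tri n * 2 = n * n.+1.
Proof. by rewrite /f_tri divnK // dvdn2 oddM /=; case: (odd n). Qed.

Theorem theorem8p1 :
  (forall k : nat, 1 <= k -> k <> 4 ->
     Rlt (INR (d_ k)) (Rmult (sqrt (IZR 2%Z)) (sqrt (INR (p_ k))))) ->
  forall n : nat, 1 <= n ->
    [/\ primepi (n ^ 3) < primepi (n ^ 3 + f_tri n),
        primepi (n ^ 3 + f_tri n) < primepi (n ^ 3 + 2 * f_tri n),
        primepi (n ^ 3 + 2 * f_tri n) < primepi (n ^ 3 + 4 * f_tri n),
        primepi (n ^ 3 + 4 * f_tri n) < primepi (n ^ 3 + 6 * f_tri n)
      & 4 <= primepi (n.+1 ^ 3) - primepi (n ^ 3)].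
Proof.
move=> gap_lt_sqrt n n_ge1.
have [n_le6 | n_gt6] := leqP n 6.
  by move: n n_ge1 n_le6 {gap_lt_sqrt}; do 7?[case=> //]; vm_compute.
have gap_sqr_lt k : 1 <= k -> k <> 4 -> d_ k * d_ k < 2 * p_ k.
  move=> k_ge1 k_neq4; apply: ltn_sqr_of_lt_sqrt.
  by rewrite mult_INR sqrt_mult; [exact: gap_lt_sqrt | exact: pos_INR ..].
have step := primepi_ltn_addn gap_sqr_lt.
have two_f := f_tri_double n; set f := f_tri n in two_f *.
have -> : n ^ 3 = n * n * n by rewrite /expn /=; lia.
have n3_ge : 343 <= n * n * n by nia.
have s1 : primepi (n * n * n) < primepi (n * n * n + f) by apply: step; nia.
have s2 : primepi (n * n * n + f) < primepi (n * n * n + 2 * f).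
  have -> : n * n * n + 2 * f = n * n * n + f + f by lia.
  by apply: step; nia.
have s3 : primepi (n * n * n + 2 * f) < primepi (n * n * n + 4 * f).
  have -> : n * n * n + 4 * f = n * n * n + 2 * f + 2 * f by lia.
  by apply: step; nia.
have s4 : primepi (n * n * n + 4 * f) < primepi (n * n * n + 6 * f).
  have -> : n * n * n + 6 * f = n * n * n + 4 * f + 2 * f by lia.
  by apply: step; nia.
have s5 : primepi (n * n * n + 6 * f) <= primepi (n.+1 ^ 3).
  by apply: leq_primepi; rewrite /expn /=; nia.
by split=> //; lia.
Qed.
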